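(* Let $t,\Delta\in\mathbb{N}$. If $A_1$ $(t,\Delta)$-approximates $B_1$ and $A_2$ $(t,\Delta)$-approximates $B_2$, then $A_1\oplus_t A_2$ $(t,\Delta)$-approximates $B_1\oplus_t B_2$.
   Context: $\mathbb{N}=\{0,1,2,\dots\}$, $[t]=\{0,1,\dots,t\}$. For $A,B\subseteq\mathbb{N}$, $A+B=\{a+b: a\in A, b\in B\}$ and $A\oplus_t B=(A+B)\cap[t]$. For $A\subseteq[t]$ and $b\in\mathbb{N}$ define $\mathrm{apx}^-_t(b,A)=\max\{a\in A\cup\{t+1\}: a\le b\}$ and $\mathrm{apx}^+_t(b,A)=\min\{a\in A\cup\{t+1\}: a\ge b\}$, with $\max\emptyset=-\infty$, $\min\emptyset=\infty$. $A$ $(t,\Delta)$-approximates $B$ if $A\subseteq B\subseteq[t]$ and for every $b\in B$, $\mathrm{apx}^+_t(b,A)-\mathrm{apx}^-_t(b,A)\le\Delta$. *)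

From Stdlib Require Import Arith Lia.

Definition nset := nat -> Prop.

Definition sumset (A B : nset) : nset := fun c => exists a b, A a /\ B b /\ c = a + b.

Definition capsum (t : nat) (A B : nset) : nset := fun c => sumset A B c /\ c <= t.

Definition ext (t : nat) (A : nset) : nset := fun a => A a \/ a = t + 1.

Definition is_apx_minus (t : nat) (A : nset) (b a : nat) : Prop :=
  ext t A a /\ a <= b /\ forall a', ext t A a' -> a' <= b -> a' <= a.

Definition is_apx_plus (t : nat) (A : nset) (b a : nat) : Prop :=
  ext t A a /\ b <= a /\ forall a', ext t A a' -> b <= a' -> a <= a'.

(* A (t,Δ)-approximates B.  If apx^- = -oo or apx^+ = +oo, the difference is
   +oo and the inequality fails; so we require both to be finite. *)
Definition approximates (t D : nat) (A B : nset) : Prop :=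
  (forall a, A a -> B a) /\ (forall b, B b -> b <= t) /\
  forall b, B b -> exists am ap,
    is_apx_minus t A b am /\ is_apx_plus t A b ap /\ ap - am <= D.

(* Let b = b1 + b2 with bi in Bi, and let li <= bi <= ri be the Ai-approximations
   of bi, so ri - li <= D.  Every sum of an element of A1 ∪ {t+1} and one of
   A2 ∪ {t+1} that lies in [t] belongs to A1 (+)_t A2, while t + 1 caps
   apx^+(b) when b <= t; hence apx^+(b) <= x + y whenever x + y >= b and
   apx^-(b) >= x + y whenever x + y <= b, for x in {l1, r1}, y in {l2, r2}.
   If r1 + l2 >= b the gap is at most r1 - l1; if l1 + r2 >= b it is at most
   r2 - l2; otherwise r1 + l2 <= apx^-(b) and apx^+(b) <= r1 + r2, so it is
   again at most r2 - l2. *)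

From Stdlib Require Import Arith Lia Classical Wf_nat.

Lemma nat_least_exists (P : nat -> Prop) :
  (exists n, P n) -> exists m, P m /\ forall k, P k -> m <= k.
Proof.
  intros HP.
  destruct (dec_inh_nat_subset_has_unique_least_element P
              (fun n => classic (P n)) HP) as [m [Hm _]].
  now exists m.
Qed.

Lemma nat_greatest_exists (P : nat -> Prop) (c : nat) :
  (exists n, P n) -> (forall n, P n -> n <= c) ->
  exists m, P m /\ forall k, P k -> k <= m.
Proof.
  intros [n Pn] Hc.
  (* the greatest element of P is c - k for the least k with P (c - k) *)
  destruct (nat_least_exists (fun k => P (c - k))) as [k [Pk Hk]].
  { exists (c - n). now replace (c - (c - n)) with n by (specialize (Hc n Pn); lia). }
  exists (c - k). split; [exact Pk|].
  intros x Px. specialize (Hc x Px).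
  assert (k <= c - x) by (apply Hk; now replace (c - (c - x)) with x by lia).
  lia.
Qed.

Section Approximations.

Variables (t : nat) (A : nset).

Lemma apx_minus_exists (b a0 : nat) :
  ext t A a0 -> a0 <= b -> exists a, is_apx_minus t A b a.
Proof.
  intros Ha0 Hle.
  destruct (nat_greatest_exists (fun a => ext t A a /\ a <= b) b)
    as [a [[Ha Hab] Hmax]]; [now exists a0 | now intros x [_ Hx] |].
  exists a. repeat split; auto.
Qed.

Lemma apx_plus_exists (b : nat) :
  b <= t + 1 -> exists a, is_apx_plus t A b a.
Proof.
  intros Hb.
  destruct (nat_least_exists (fun a => ext t A a /\ b <= a))
    as [a [[Ha Hba] Hmin]].
  { exists (t + 1). split; [now right | exact Hb]. }
  exists a. repeat split; auto.
Qed.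

Lemma apx_minus_ext (b a : nat) : is_apx_minus t A b a -> ext t A a.
Proof. now intros [Ha _]. Qed.

Lemma apx_plus_ext (b a : nat) : is_apx_plus t A b a -> ext t A a.
Proof. now intros [Ha _]. Qed.

End Approximations.

Arguments apx_minus_ext {t A b a}.
Arguments apx_plus_ext {t A b a}.

Section CapsumApproximations.

Context {t : nat} {A1 A2 : nset}.

Notation A := (capsum t A1 A2).

Lemma ext_capsum (x y : nat) :
  ext t A1 x -> ext t A2 y -> x + y <= t -> A (x + y).
Proof.
  intros [Hx | Hx] [Hy | Hy] Hxy; try lia.
  split; [now exists x, y | exact Hxy].
Qed.

Lemma apx_minus_capsum_ge {b L x y : nat} :
  is_apx_minus t A b L -> b <= t ->
  ext t A1 x -> ext t A2 y -> x + y <= b -> x + y <= L.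
Proof.
  intros [_ [_ HL]] Hb Hx Hy Hxy.
  apply HL; [left; apply ext_capsum; auto; lia | exact Hxy].
Qed.

Lemma apx_plus_capsum_le {b R x y : nat} :
  is_apx_plus t A b R -> b <= t ->
  ext t A1 x -> ext t A2 y -> b <= x + y -> R <= x + y.
Proof.
  intros [_ [_ HR]] Hb Hx Hy Hxy.
  destruct (le_lt_dec (x + y) t).
  - apply HR; [left; apply ext_capsum | ]; auto.
  - enough (R <= t + 1) by lia.
    apply HR; [now right | lia].
Qed.

Lemma apx_capsum_gap {D b1 b2 l1 r1 l2 r2 L R : nat} :
  b1 + b2 <= t ->
  is_apx_minus t A1 b1 l1 -> is_apx_plus t A1 b1 r1 -> r1 - l1 <= D ->
  is_apx_minus t A2 b2 l2 -> is_apx_plus t A2 b2 r2 -> r2 - l2 <= D ->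
  is_apx_minus t A (b1 + b2) L -> is_apx_plus t A (b1 + b2) R ->
  R - L <= D.
Proof.
  intros Hb Hl1 Hr1 D1 Hl2 Hr2 D2 HL HR.
  pose proof (apx_minus_ext Hl1) as El1. pose proof (apx_plus_ext Hr1) as Er1.
  pose proof (apx_minus_ext Hl2) as El2. pose proof (apx_plus_ext Hr2) as Er2.
  destruct Hl1 as [_ [Ll1 _]], Hr1 as [_ [Lr1 _]].
  destruct Hl2 as [_ [Ll2 _]], Hr2 as [_ [Lr2 _]].
  assert (l1 + l2 <= L) by (apply (apx_minus_capsum_ge HL); auto; lia).
  destruct (le_lt_dec (b1 + b2) (r1 + l2)) as [Hr1l2 | Hr1l2].
  { pose proof (apx_plus_capsum_le HR Hb Er1 El2 Hr1l2). lia. }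
  destruct (le_lt_dec (b1 + b2) (l1 + r2)) as [Hl1r2 | Hl1r2].
  { pose proof (apx_plus_capsum_le HR Hb El1 Er2 Hl1r2). lia. }
  assert (r1 + l2 <= L) by (apply (apx_minus_capsum_ge HL); auto; lia).
  assert (R <= r1 + r2) by (apply (apx_plus_capsum_le HR); auto; lia).
  lia.
Qed.

End CapsumApproximations.

Theorem lemma4p5 (t D : nat) (A1 B1 A2 B2 : nset) :
  approximates t D A1 B1 -> approximates t D A2 B2 ->
  approximates t D (capsum t A1 A2) (capsum t B1 B2).
Proof.
  intros [S1 [_ H1]] [S2 [_ H2]].
  split; [|split].
  - intros c [[a [b [Ha [Hb ->]]]] Hc]. split; [exists a, b; auto | exact Hc].
  - now intros c [_ Hc].
  - intros c [[b1 [b2 [Hb1 [Hb2 ->]]]] Hc].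
    destruct (H1 b1 Hb1) as [l1 [r1 [Hl1 [Hr1 D1]]]].
    destruct (H2 b2 Hb2) as [l2 [r2 [Hl2 [Hr2 D2]]]].
    assert (Hl : l1 + l2 <= b1 + b2)
      by (destruct Hl1 as [_ [? _]], Hl2 as [_ [? _]]; lia).
    destruct (apx_minus_exists t (capsum t A1 A2) (b1 + b2) (l1 + l2))
      as [L HL]; [| exact Hl |].
    { left. apply ext_capsum; [exact (apx_minus_ext Hl1) | exact (apx_minus_ext Hl2) | lia]. }
    destruct (apx_plus_exists t (capsum t A1 A2) (b1 + b2)) as [R HR]; [lia|].
    exists L, R. split; [exact HL | split; [exact HR |]].
    exact (apx_capsum_gap Hc Hl1 Hr1 D1 Hl2 Hr2 D2 HL HR).
Qed.
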